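(* Let $d\ge1$, $c\in C(d,2,p)$, and $0\le a\le d$. Then the monomial $x^ay^{d-a}$ has carry pattern $\le c$ if and only if $a\in A^c$, where $A^c=\{a: 0\le a\le d,\ \mathrm{Cont}(a_{[t_r,t_{r+1})})\le\mathrm{Cont}(\delta_{t_r})\text{ for all }0\le r\le\ell\}$.
   Context: $p$ prime. Base-$p$ expansion $d=\sum_{j=0}^Md_jp^j$, $d_M\ne0$, digits in $[0,p-1]$. The carry pattern $(c_1,\dots,c_M)$ of $x^ay^b$ ($a+b=d$) is determined by $\sum_{j<\ell}(a_j+b_j)p^j=c_\ell p^\ell+\sum_{j<\ell}d_jp^j$ for $1\le\ell\le M$ ($c_i=0$ for $i<1$, $i>M$). $C(d,2,p)$ is the set of such carry patterns, ordered componentwise. $\mathcal Z(c,d)=\{0\le k\le M: c_k=0,\ (c_{k-1},d_{k-1})\ne(0,p-1)\}$, with the convention $0\in\mathcal Z(c,d)$, written $\{0=t_0<\dots<t_\ell\}$, and $t_{\ell+1}=M+1$. For an integer $a\ge0$ with base-$p$ digits $a_j$, $a_{[t_r,t_{r+1})}=(a_{t_r},\dots,a_{t_{r+1}-1})$ and $\mathrm{Cont}(a_{[t_r,t_{r+1})})=\sum_{k=t_r}^{t_{r+1}-1}a_kp^{k-t_r}$; $\delta_{t_r}=d_{[t_r,t_{r+1})}$. *)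

From mathcomp Require Import all_boot.
Set Implicit Arguments. Unset Strict Implicit. Unset Printing Implicit Defensive.

Definition digit (p n j : nat) : nat := (n %/ p ^ j) %% p.

Definition topidx (p d : nat) : nat := trunc_log p d.

(* Carry c_l of x^a y^b with b = d - a, for 1 <= l <= M, given by
   sum_{j<l} (a_j + b_j) p^j = c_l p^l + sum_{j<l} d_j p^j. *)
Definition carry (p d a l : nat) : nat :=
  ((\sum_(0 <= j < l) (digit p a j + digit p (d - a) j) * p ^ j)
     - \sum_(0 <= j < l) digit p d j * p ^ j) %/ p ^ l.

Definition carry_pattern (p d a : nat) : seq nat :=
  [seq carry p d a l | l <- iota 1 (topidx p d)].

Definition carry_patterns (p d : nat) : seq (seq nat) :=
  [seq carry_pattern p d a | a <- iota 0 d.+1].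

Definition pat_le (c c' : seq nat) : bool := all2 leq c c'.

(* c_k with the convention c_k = 0 for k < 1 or k > M *)
Definition cget (c : seq nat) (k : nat) : nat :=
  if k is k'.+1 then nth 0 c k' else 0.

(* Z(c,d), as the increasing list t_0 = 0 < t_1 < ... < t_ell *)
Definition Zset (p d : nat) (c : seq nat) : seq nat :=
  [seq k <- iota 0 (topidx p d).+1 |
     (k == 0) ||
     ((cget c k == 0) && ~~ ((cget c k.-1 == 0) && (digit p d k.-1 == p.-1)))].

Definition Cont (p a s e : nat) : nat :=
  \sum_(s <= k < e) digit p a k * p ^ (k - s).

Definition in_Ac (p d : nat) (c : seq nat) (a : nat) : Prop :=
  a <= d /\
  let t := Zset p d c in
  forall r, r < size t ->
    Cont p a (nth 0 t r) (nth (topidx p d).+1 t r.+1)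
      <= Cont p d (nth 0 t r) (nth (topidx p d).+1 t r.+1).

From mathcomp Require Import all_boot.

(* The carry c_l of x^a y^(d-a) is the borrow of the subtraction d - a in
   base p at position l, i.e. c_l = [d mod p^l < a mod p^l].  So the pattern
   of a is at most c exactly when a mod p^l <= d mod p^l at every l with
   c_l = 0.  At the points t_r of Z(c,d) this comparison of truncations
   propagates block by block, since it is equivalent to the comparison of
   the block values Cont once it holds at the start of the block; and a
   position l with c_l = 0 outside Z(c,d) has c_(l-1) = 0 and d_(l-1) = p-1,
   so the comparison at l - 1 extends to l. *)

Lemma modnM_split n m q : n %% (q * m) = n %/ m %% q * m + n %% m.
Proof.
rewrite modn_divl {1}(divn_eq (n %% (q * m)) m).
by rewrite (modn_dvdm _ (dvdn_mull q (dvdnn m))).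
Qed.

Lemma all2_map (T : Type) (r : rel nat) (f g : T -> nat) (s : seq T) :
  all2 r (map f s) (map g s) = all (fun x => r (f x) (g x)) s.
Proof. by elim: s => //= x s ->. Qed.

Section Digits.

Variable p : nat.
Hypothesis p_gt0 : 0 < p.

Let expn_p_gt0 l : 0 < p ^ l. Proof. by rewrite expn_gt0 p_gt0. Qed.

Lemma sum_digit_exp n l : \sum_(0 <= j < l) digit p n j * p ^ j = n %% p ^ l.
Proof.
elim: l => [|l IH]; first by rewrite big_geq // modn1.
by rewrite big_nat_recr //= IH expnS modnM_split addnC.
Qed.

Lemma carryE d a l : a <= d -> carry p d a l = (d %% p ^ l < a %% p ^ l).
Proof.
move=> le_ad; rewrite /carry.
under eq_bigr do rewrite mulnDl.
rewrite big_split /= !sum_digit_exp modnB //.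
have le_borrow : a %% p ^ l <= (d %% p ^ l < a %% p ^ l) * p ^ l + d %% p ^ l.
  case: ltnP => [_ | le_mod]; last by rewrite /= mul0n.
  by rewrite mul1n ltnW // ltn_addr // ltn_pmod.
by rewrite subnKC // addnK mulnK.
Qed.

Lemma ContE n s e : s <= e -> Cont p n s e = n %% p ^ e %/ p ^ s.
Proof.
move=> le_se; rewrite -sum_digit_exp (big_cat_nat (leq0n s) le_se) /= sum_digit_exp.
have -> : \sum_(s <= j < e) digit p n j * p ^ j = Cont p n s e * p ^ s.
  rewrite /Cont mulnC big_distrr /=; apply: eq_big_nat => k /andP[le_sk _].
  by rewrite mulnCA -expnD subnKC.
by rewrite addnC divnMDl // divn_small ?addn0 // ltn_pmod.
Qed.

Lemma leq_Cont a d s e :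
  a %% p ^ e <= d %% p ^ e -> Cont p a s e <= Cont p d s e.
Proof.
move=> le_e; case: (leqP s e) => [le_se | lt_es].
  by rewrite !ContE //; apply: leq_div2r.
by rewrite /Cont !big_geq // ltnW.
Qed.

Lemma leq_mod_Cont a d s e : s <= e -> a %% p ^ s <= d %% p ^ s ->
  Cont p a s e <= Cont p d s e -> a %% p ^ e <= d %% p ^ e.
Proof.
move=> le_se le_s; rewrite !ContE // => le_block.
have dvd_se : p ^ s %| p ^ e by apply: dvdn_exp2l.
rewrite (divn_eq (a %% p ^ e) (p ^ s)) (divn_eq (d %% p ^ e) (p ^ s)).
rewrite !(modn_dvdm _ dvd_se).
by apply: leq_add; rewrite // leq_mul2r le_block orbT.
Qed.

Lemma leq_mod_digit_max a d l : a %% p ^ l <= d %% p ^ l ->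
  digit p d l = p.-1 -> a %% p ^ l.+1 <= d %% p ^ l.+1.
Proof.
move=> le_l d_max; rewrite expnS !modnM_split -/(digit p a l) -/(digit p d l) d_max.
apply: leq_add => //; rewrite leq_mul2r -ltnS prednK //.
by rewrite ltn_pmod // orbT.
Qed.

End Digits.

Lemma seq_cget (c : seq nat) : c = [seq cget c k | k <- iota 1 (size c)].
Proof. by rewrite -{1}(mkseq_nth 0 c) /mkseq (iotaDl 1 0) -map_comp. Qed.

Lemma size_carry_patterns p d c : c \in carry_patterns p d -> size c = topidx p d.
Proof. by case/mapP => a _ ->; rewrite size_map size_iota. Qed.

Lemma pat_le_carry_patternP p d a c : 0 < p -> a <= d -> size c = topidx p d ->
  pat_le (carry_pattern p d a) c <->
  (forall l, 0 < l <= topidx p d -> cget c l = 0 -> a %% p ^ l <= d %% p ^ l).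
Proof.
move=> p_gt0 le_ad size_c.
rewrite /pat_le {1}(seq_cget c) size_c /carry_pattern all2_map.
split=> [/allP le_pat l l_range c_l0 | le_mod].
  have := le_pat l; rewrite mem_iota add1n ltnS => /(_ l_range).
  by rewrite c_l0 carryE // leqn0 eqb0 -leqNgt.
apply/allP => l; rewrite mem_iota add1n ltnS carryE // => l_range.
case: (posnP (cget c l)) => [c_l0 | c_l_gt0]; last exact: leq_trans (leq_b1 _) _.
by rewrite c_l0 leqn0 eqb0 -leqNgt le_mod.
Qed.

Section ZeroSet.

Variables (p d : nat) (c : seq nat).
Let M := topidx p d.
Let t := Zset p d c.

Lemma mem_Zset k : (k \in t) = (k <= M) && ((k == 0) ||
  ((cget c k == 0) && ~~ ((cget c k.-1 == 0) && (digit p d k.-1 == p.-1)))).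
Proof. by rewrite /t /Zset mem_filter mem_iota /= ltnS andbC. Qed.

Lemma nth_Zset0 : nth 0 t 0 = 0.
Proof. by []. Qed.

Lemma sorted_Zset : sorted ltn t.
Proof. by apply: sorted_filter; [exact: ltn_trans | exact: iota_ltn_sorted]. Qed.

Variable a : nat.
Hypotheses (p_gt1 : 1 < p) (le_ad : a <= d).
Hypothesis le_mod_carry_free :
  forall l, 0 < l <= M -> cget c l = 0 -> a %% p ^ l <= d %% p ^ l.

Lemma leq_mod_Zset_next r :
  a %% p ^ nth M.+1 t r <= d %% p ^ nth M.+1 t r.
Proof.
case: (ltnP r (size t)) => [lt_r | ge_r]; last first.
  have lt_d := trunc_log_ltn d p_gt1.
  by rewrite nth_default // !modn_small // (leq_ltn_trans le_ad).
have := mem_nth M.+1 lt_r; rewrite mem_Zset.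
case: (posnP (nth M.+1 t r)) => [-> | e_gt0]; first by rewrite !modn1.
by case/andP=> le_eM /andP[/eqP c_e0 _]; apply: le_mod_carry_free; rewrite ?e_gt0.
Qed.

End ZeroSet.

Section FromBlocks.

Variables (p d : nat) (c : seq nat) (a : nat).
Let M := topidx p d.
Let t := Zset p d c.
Hypothesis p_gt0 : 0 < p.
Hypothesis Cont_blocks : forall r, r < size t ->
  Cont p a (nth 0 t r) (nth M.+1 t r.+1) <= Cont p d (nth 0 t r) (nth M.+1 t r.+1).

Lemma leq_mod_nth_Zset r : r < size t -> a %% p ^ nth 0 t r <= d %% p ^ nth 0 t r.
Proof.
elim: r => [|r IH] lt_r; first by rewrite nth_Zset0 !modn1.
have lt_r' : r < size t by apply: ltnW.
have lt_tr : nth 0 t r < nth 0 t r.+1.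
  by apply: (sorted_ltn_nth ltn_trans) => //; apply: sorted_Zset.
apply: leq_mod_Cont (ltnW lt_tr) (IH lt_r') _ => //.
by rewrite -(set_nth_default 0 M.+1 lt_r); apply: Cont_blocks.
Qed.

Lemma leq_mod_Zset k : k \in t -> a %% p ^ k <= d %% p ^ k.
Proof.
by move=> k_t; rewrite -(nth_index 0 k_t); apply: leq_mod_nth_Zset; rewrite index_mem.
Qed.

Lemma leq_mod_carry_free l : 0 < l <= M -> cget c l = 0 -> a %% p ^ l <= d %% p ^ l.
Proof.
elim: l => [//|l IH] /andP[_ le_lM] c_l0.
case: (boolP (l.+1 \in t)) => [/leq_mod_Zset // | not_Z].
move: not_Z; rewrite mem_Zset le_lM c_l0 /= negbK => /andP[/eqP c_prev0 /eqP d_max].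
apply: leq_mod_digit_max => //.
case: (posnP l) => [-> | l_gt0]; first by rewrite !modn1.
by apply: IH; rewrite ?l_gt0 1?ltnW.
Qed.

End FromBlocks.

Theorem mainTheorem11 (p d : nat) (c : seq nat) (a : nat) :
  prime p -> 1 <= d -> c \in carry_patterns p d -> a <= d ->
  (pat_le (carry_pattern p d a) c <-> in_Ac p d c a).
Proof.
move=> p_prime _ c_pat le_ad.
have p_gt1 := prime_gt1 p_prime; have p_gt0 := ltnW p_gt1.
have [to_mod of_mod] :=
  pat_le_carry_patternP _ _ _ _ p_gt0 le_ad (size_carry_patterns _ _ _ c_pat).
split=> [/to_mod le_mod | [_ Cont_blocks]].
  by split=> // t r _; apply/leq_Cont/leq_mod_Zset_next.
exact/of_mod/leq_mod_carry_free.
Qed.
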